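(* Let $\delta\in(0,1)$. For any $\lambda\in G_\delta$ and any contraction $T$ on a Hilbert space $\mathcal{M}$, the operator $1-\tfrac12\lambda T^*$ is invertible, so that $\lambda_T=(\delta T^*-\tfrac12\lambda)(1-\tfrac12\lambda T^* )^{-1}$ is a well-defined bounded operator on $\mathcal{M}$, and $\|\lambda_T\|<1$. Moreover, for a contraction $T$ on $\mathcal{M}$, the map $G_\delta\to\mathcal{B}(\mathcal{M})$, $\lambda\mapsto\lambda_T$, is holomorphic on $G_\delta$.
   Context: $G_\delta=\{x+iy: x,y\in\mathbb{R},\ \frac{x^2}{(1+\delta)^2}+\frac{y^2}{(1-\delta)^2}<1\}$. *)

From HB Require Import structures.
From mathcomp Require Import all_boot all_order all_algebra.
From mathcomp Require Import reals.
From mathcomp.real_closed Require Import complex.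
Set Implicit Arguments. Unset Strict Implicit. Unset Printing Implicit Defensive.
Import Order.TTheory GRing.Theory Num.Theory.
Local Open Scope ring_scope.

Section HilbertDefs.
Variable R : realType.
Local Notation C := (complex R).

Definition cabs (z : C) : R := Num.sqrt (complex.Re z ^+ 2 + complex.Im z ^+ 2).

Definition cR (r : R) : C := Complex r 0.

Variable V : lmodType C.
Variable ip : V -> V -> C.   (* inner product, linear in the first argument *)

Definition hnorm (x : V) : R := Num.sqrt (complex.Re (ip x x)).

Definition is_inner_product : Prop :=
  [/\ (forall (a : C) (x y z : V), ip (a *: x + y) z = a * ip x z + ip y z),
      (forall x y : V, ip y x = conjc (ip x y)),
      (forall x : V, complex.Im (ip x x) = 0 /\ 0 <= complex.Re (ip x x))
    & (forall x : V, ip x x = 0 -> x = 0)].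

Definition complete : Prop :=
  forall u : nat -> V,
    (forall e : R, 0 < e -> exists N : nat, forall m n : nat,
        (N <= m)%N -> (N <= n)%N -> hnorm (u m - u n) < e) ->
    exists l : V, forall e : R, 0 < e -> exists N : nat, forall n : nat,
        (N <= n)%N -> hnorm (u n - l) < e.

Definition is_hilbert : Prop := is_inner_product /\ complete.

Definition is_linear_op (T : V -> V) : Prop :=
  forall (a : C) (x y : V), T (a *: x + y) = a *: T x + T y.

Definition op_norm_le (T : V -> V) (c : R) : Prop :=
  forall x : V, hnorm (T x) <= c * hnorm x.

Definition bounded_op (T : V -> V) : Prop :=
  is_linear_op T /\ exists c : R, op_norm_le T c.

(* ||T|| < 1  (the operator norm is the least such bound, which is attained) *)
Definition op_norm_lt1 (T : V -> V) : Prop :=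
  exists c : R, c < 1 /\ op_norm_le T c.

Definition contraction (T : V -> V) : Prop := bounded_op T /\ op_norm_le T 1.

Definition is_adjoint (T Ts : V -> V) : Prop :=
  forall x y : V, ip (T x) y = ip x (Ts y).

Definition op_inverse (A S : V -> V) : Prop :=
  [/\ bounded_op S, (forall x, S (A x) = x) & (forall x, A (S x) = x)].

Definition denom_op (Ts : V -> V) (lam : C) : V -> V :=
  fun x => x - (lam / 2%:R) *: Ts x.

Definition numer_op (delta : R) (Ts : V -> V) (lam : C) : V -> V :=
  fun x => cR delta *: Ts x - (lam / 2%:R) *: x.

Definition holomorphic_on (G : C -> Prop) (F : C -> V -> V) : Prop :=
  forall lam : C, G lam ->
    exists D : V -> V, bounded_op D /\
      forall e : R, 0 < e -> exists d : R, 0 < d /\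
        forall mu : C, G mu -> 0 < cabs (mu - lam) < d ->
          op_norm_le (fun x => F mu x - F lam x - (mu - lam) *: D x)
                     (e * cabs (mu - lam)).

End HilbertDefs.

Definition G_delta (R : realType) (delta : R) (lam : complex R) : Prop :=
  (complex.Re lam) ^+ 2 / (1 + delta) ^+ 2 + (complex.Im lam) ^+ 2 / (1 - delta) ^+ 2 < 1.

(* Put w = lam/2 and A = T^*, again a contraction.  Rescaled, lam lies in G_delta iff
   |delta w^* - w| < (1 - delta^2)/2, and then |w|^2 <= (1 + delta^2)/2 < 1.  Hence 1 - wA is
   bounded below by 1 - |w|, and onto by the Banach fixed-point theorem for y |-> x + wAy.
   Expanding the norms,
     ||y - wAy||^2 - ||delta Ay - wy||^2
       = (1 - |w|^2) ||y||^2 + (|w|^2 - delta^2) ||Ay||^2 + 2 Re <(delta w^* - w) Ay, y>,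
   which Cauchy-Schwarz and ||Ay|| <= ||y|| bound below by
   ((1 - delta^2)/2 - |delta w^* - w|) ||y||^2; with ||y - wAy|| <= 2 ||y|| this yields
   ||(delta A - w) y|| <= c ||(1 - wA) y|| for some c < 1.  For holomorphy, the resolvent identity
   S_mu = S_lam + ((mu - lam)/2) S_mu A S_lam makes the first-order remainder of
   mu |-> (delta A - mu/2) S_mu equal to ((mu - lam)/2)^2 times an operator that is bounded
   uniformly for mu near lam. *)

From HB Require Import structures.
From mathcomp Require Import all_boot all_order all_algebra.
From mathcomp Require Import reals.
From mathcomp.real_closed Require Import complex.
From mathcomp Require Import ring lra.
Import Order.TTheory GRing.Theory Num.Theory.
Set Implicit Arguments.
Unset Strict Implicit.
Unset Printing Implicit Defensive.
Local Open Scope ring_scope.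

Section ComplexModulus.
Variable R : realType.
Implicit Types x y : complex R.

Lemma cabsE x : cabs x = Normc.normc x. Proof. by case: x. Qed.

Lemma cabs_ge0 x : 0 <= cabs x. Proof. exact: sqrtr_ge0. Qed.

Lemma cabs0 : cabs (0 : complex R) = 0. Proof. by rewrite /cabs /= expr0n addr0 sqrtr0. Qed.

Lemma cabs_sqr x : cabs x ^+ 2 = complex.Re x ^+ 2 + complex.Im x ^+ 2.
Proof. by rewrite sqr_sqrtr // addr_ge0 // sqr_ge0. Qed.

Lemma cabsM x y : cabs (x * y) = cabs x * cabs y.
Proof. by rewrite !cabsE Normc.normcM. Qed.

Lemma cabsD x y : cabs (x + y) <= cabs x + cabs y.
Proof. by rewrite !cabsE le_normcD. Qed.

Lemma cabs_cR (r : R) : 0 <= r -> cabs (cR r) = r.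
Proof. by move=> r0; rewrite /cabs /= expr0n addr0 sqrtr_sqr ger0_norm. Qed.

Lemma cabs_half x : cabs (x / 2%:R) = cabs x / 2.
Proof.
rewrite cabsM [cabs _^-1]cabsE Normc.normcV -cabsE; congr (_ * _^-1).
by rewrite /cabs /= addr0 expr0n addr0 sqrtr_sqr ger0_norm //; lra.
Qed.

End ComplexModulus.

Section InnerProduct.
Variable R : realType.
Variable V : lmodType (complex R).
Variable ip : V -> V -> complex R.
Hypothesis Hip : is_inner_product ip.
Local Notation hn := (hnorm ip).
Implicit Types (x y z : V) (f g T Ts : V -> V).

Lemma ipDl x y z : ip (x + y) z = ip x z + ip y z.
Proof. by case: Hip => H _ _ _; rewrite -{1}[x]scale1r H mul1r. Qed.

Lemma ip0l z : ip 0 z = 0.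
Proof. by apply: (addrI (ip 0 z)); rewrite -ipDl !addr0. Qed.

Lemma ipZl a x z : ip (a *: x) z = a * ip x z.
Proof. by case: Hip => H _ _ _; rewrite -[a *: x]addr0 H ip0l addr0. Qed.

Lemma ipNl x z : ip (- x) z = - ip x z.
Proof. by rewrite -scaleN1r ipZl mulN1r. Qed.

Lemma ipC x y : ip y x = conjc (ip x y).
Proof. by case: Hip => _ H _ _; apply: H. Qed.

Lemma ipDr x y z : ip x (y + z) = ip x y + ip x z.
Proof. by rewrite ipC ipDl rmorphD /= -!ipC. Qed.

Lemma ipZr a x y : ip x (a *: y) = conjc a * ip x y.
Proof. by rewrite ipC ipZl rmorphM /= -ipC. Qed.

Lemma ip0r z : ip z 0 = 0.
Proof. by rewrite ipC ip0l conjc0. Qed.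

Lemma ipNr x y : ip x (- y) = - ip x y.
Proof. by rewrite -scaleN1r ipZr rmorphN1 mulN1r. Qed.

Lemma ipBr x y z : ip x (y - z) = ip x y - ip x z.
Proof. by rewrite ipDr ipNr. Qed.

Lemma Im_ipxx x : complex.Im (ip x x) = 0.
Proof. by case: Hip => _ _ H _; case: (H x). Qed.

Lemma hnorm_ge0 x : 0 <= hn x. Proof. exact: sqrtr_ge0. Qed.

Lemma hnorm_sqr x : hn x ^+ 2 = complex.Re (ip x x).
Proof. by case: Hip => _ _ H _; rewrite sqr_sqrtr //; case: (H x). Qed.

Lemma hnorm_eq0 x : hn x = 0 -> x = 0.
Proof.
case: Hip => _ _ _ H hx0; apply: H; move: (Im_ipxx x) (hnorm_sqr x).
by rewrite hx0 expr0n; case: (ip x x) => /= a b -> <-.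
Qed.

Lemma hnorm0 : hn 0 = 0.
Proof. by rewrite /hnorm ip0l sqrtr0. Qed.

Lemma hnorm_le x b : 0 <= b -> hn x ^+ 2 <= b ^+ 2 -> hn x <= b.
Proof. by move=> b0; rewrite ler_pXn2r ?nnegrE ?hnorm_ge0. Qed.

Lemma hnorm_sqrD x y :
  hn (x + y) ^+ 2 = hn x ^+ 2 + hn y ^+ 2 + 2 * complex.Re (ip x y).
Proof.
rewrite !hnorm_sqr ipDl !ipDr [ip y x]ipC.
by case: (ip x y) (ip x x) (ip y y) => [a b] [c d] [e f] /=; ring.
Qed.

Lemma hnormZ a x : hn (a *: x) = cabs a * hn x.
Proof.
rewrite /hnorm /cabs -sqrtrM ?addr_ge0 ?sqr_ge0 // ipZl ipZr; congr Num.sqrt.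
by move: (Im_ipxx x); case: a (ip x x) => [a b] [c d] /= ->; ring.
Qed.

Lemma hnorm_oppr x : hn (- x) = hn x.
Proof.
by rewrite -scaleN1r hnormZ /cabs /= oppr0 expr0n addr0 sqrtr_sqr normrN normr1 mul1r.
Qed.

Lemma Re_ip_le x y : complex.Re (ip x y) <= hn x * hn y.
Proof.
have [->|x0] := eqVneq x 0; first by rewrite ip0l hnorm0 mul0r.
have [->|y0] := eqVneq y 0; first by rewrite ip0r hnorm0 mulr0.
have hnorm_gt0 z : z != 0 -> 0 < hn z.
  by move=> z0; rewrite lt_neqAle hnorm_ge0 andbT eq_sym (contra_neq (@hnorm_eq0 z) z0).
have ab0 := mulr_gt0 (hnorm_gt0 _ x0) (hnorm_gt0 _ y0).
have := sqr_ge0 (hn (cR (hn y) *: x - cR (hn x) *: y)).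
rewrite hnorm_sqrD hnorm_oppr !hnormZ !cabs_cR ?hnorm_ge0 // ipNr ipZl ipZr.
case: (ip x y) => r i /=; nra.
Qed.

Lemma ler_hnormD x y : hn (x + y) <= hn x + hn y.
Proof.
apply: hnorm_le; first by rewrite addr_ge0 ?hnorm_ge0.
by rewrite hnorm_sqrD; have := Re_ip_le x y; nra.
Qed.

Lemma ler_hnormB x y : hn (x - y) <= hn x + hn y.
Proof. by rewrite -(hnorm_oppr y) ler_hnormD. Qed.

Lemma hnorm_distC x y : hn (x - y) = hn (y - x).
Proof. by rewrite -hnorm_oppr opprB. Qed.

Section LinearOperator.
Variable T : V -> V.
Hypothesis Tlin : is_linear_op T.

Lemma linear_opD x y : T (x + y) = T x + T y.
Proof. by have := Tlin 1 x y; rewrite !scale1r. Qed.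

Lemma linear_op0 : T 0 = 0.
Proof. by apply: (addrI (T 0)); rewrite -linear_opD !addr0. Qed.

Lemma linear_opZ a x : T (a *: x) = a *: T x.
Proof. by have := Tlin a x 0; rewrite !addr0 linear_op0 addr0. Qed.

Lemma linear_opB x y : T (x - y) = T x - T y.
Proof. by rewrite linear_opD -scaleN1r linear_opZ scaleN1r. Qed.

End LinearOperator.

Lemma bounded_op_id : bounded_op ip (fun x => x).
Proof. by split=> //; exists 1 => x; rewrite mul1r. Qed.

Lemma linear_op_comp f g :
  is_linear_op f -> is_linear_op g -> is_linear_op (fun x => f (g x)).
Proof. by move=> hf hg a x y; rewrite hg hf. Qed.

Lemma linear_op_sub f g :
  is_linear_op f -> is_linear_op g -> is_linear_op (fun x => f x - g x).
Proof. by move=> hf hg a x y; rewrite hf hg scalerBr opprD addrACA. Qed.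

Lemma linear_op_scale c f : is_linear_op f -> is_linear_op (fun x => c *: f x).
Proof. by move=> hf a x y; rewrite hf scalerDr !scalerA mulrC. Qed.

Lemma op_norm_le_trans f a b : op_norm_le ip f a -> a <= b -> op_norm_le ip f b.
Proof. by move=> hf ab x; apply: le_trans (hf x) _; rewrite ler_wpM2r ?hnorm_ge0. Qed.

Lemma op_norm_le_comp f g a b : 0 <= a ->
  op_norm_le ip f a -> op_norm_le ip g b -> op_norm_le ip (fun x => f (g x)) (a * b).
Proof. by move=> a0 hf hg x; apply: le_trans (hf _) _; rewrite -mulrA ler_wpM2l. Qed.

Lemma op_norm_le_sub f g a b :
  op_norm_le ip f a -> op_norm_le ip g b -> op_norm_le ip (fun x => f x - g x) (a + b).
Proof. by move=> hf hg x; rewrite mulrDl; apply: le_trans (ler_hnormB _ _) (lerD _ _). Qed.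

Lemma op_norm_le_scale c f a :
  op_norm_le ip f a -> op_norm_le ip (fun x => c *: f x) (cabs c * a).
Proof. by move=> hf x; rewrite hnormZ -mulrA ler_wpM2l ?cabs_ge0. Qed.

Lemma bounded_op_comp f g :
  bounded_op ip f -> bounded_op ip g -> bounded_op ip (fun x => f (g x)).
Proof.
move=> [flin [a hf]] [glin [b hg]]; split; first exact: linear_op_comp.
by exists (`|a| * b); apply: op_norm_le_comp (normr_ge0 a) (op_norm_le_trans hf (ler_norm a)) hg.
Qed.

Lemma bounded_op_sub f g :
  bounded_op ip f -> bounded_op ip g -> bounded_op ip (fun x => f x - g x).
Proof.
move=> [flin [a hf]] [glin [b hg]]; split; first exact: linear_op_sub.
by exists (a + b); apply: op_norm_le_sub.
Qed.

Lemma bounded_op_scale c f : bounded_op ip f -> bounded_op ip (fun x => c *: f x).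
Proof.
move=> [flin [a hf]]; split; first exact: linear_op_scale.
by exists (cabs c * a); apply: op_norm_le_scale.
Qed.

Lemma adjoint_linear T Ts : is_adjoint ip T Ts -> is_linear_op Ts.
Proof.
move=> adj a x y; apply/eqP; rewrite -subr_eq0; apply/eqP/hnorm_eq0.
set d := _ - _; have ip_d0 u : ip u d = 0.
  by rewrite ipBr ipDr ipZr -!adj ipDr ipZr subrr.
by rewrite /hnorm ip_d0 sqrtr0.
Qed.

Lemma adjoint_contraction T Ts :
  contraction ip T -> is_adjoint ip T Ts -> contraction ip Ts.
Proof.
move=> [_ hT] adj; have Ts_le y : hn (Ts y) <= 1 * hn y.
  have := Re_ip_le (T (Ts y)) y; rewrite adj -hnorm_sqr mul1r.
  have := hT (Ts y); rewrite mul1r.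
  have := hnorm_ge0 (Ts y); have := hnorm_ge0 (T (Ts y)); have := hnorm_ge0 y.
  nra.
by split; [split; [exact: adjoint_linear adj | exists 1] | ].
Qed.

End InnerProduct.

Lemma exprn_bernoulli_le1 (R : realFieldType) (q : R) (n : nat) :
  0 <= q <= 1 -> q ^+ n * (1 + n%:R * (1 - q)) <= 1.
Proof.
case/andP=> q0 q1; elim: n => [|n IH]; first by rewrite expr0 mul0r addr0 mul1r.
have qn0 : 0 <= q ^+ n := exprn_ge0 n q0.
have qn1 : q ^+ n <= 1 := exprn_ile1 n q0 q1.
have : q * (q ^+ n * (1 + n%:R * (1 - q))) <= q by rewrite ler_piMr.
have : 0 <= (1 - q) * (1 - q * q ^+ n) by rewrite mulr_ge0 ?subr_ge0 ?mulr_ile1.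
rewrite exprS -natr1; nra.
Qed.

Lemma exists_exprn_le (R : archiRealFieldType) (q e : R) :
  0 <= q < 1 -> 0 < e -> exists N : nat, q ^+ N <= e.
Proof.
case/andP=> q0 q1 e0; have eq0 : 0 < e * (1 - q) by rewrite mulr_gt0 ?subr_gt0.
set N := Num.Def.archi_bound (e * (1 - q))^-1; exists N.
have := @archi_boundP _ (e * (1 - q))^-1; rewrite invr_ge0 ltW // -/N.
rewrite -[_^-1]mul1r ltr_pdivrMr // => gtN.
have := exprn_bernoulli_le1 N (_ : 0 <= q <= 1); rewrite q0 ltW //.
have : 0 <= q ^+ N := exprn_ge0 N q0.
nra.
Qed.

Section Completeness.
Variable R : realType.
Variable V : lmodType (complex R).
Variable ip : V -> V -> complex R.
Hypothesis Hip : is_inner_product ip.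
Local Notation hn := (hnorm ip).

Lemma hnorm_lt_all_eq0 (z : V) : (forall e : R, 0 < e -> hn z < e) -> z = 0.
Proof.
move=> small; apply: (hnorm_eq0 Hip); apply/eqP; rewrite eq_le hnorm_ge0 andbT.
by rewrite leNgt; apply/negP => /small; rewrite ltxx.
Qed.

Lemma cauchy_of_geometric (u : nat -> V) (c q : R) : 0 <= q < 1 ->
  (forall n, hn (u n.+1 - u n) <= c * q ^+ n) ->
  forall e, 0 < e -> exists N, forall m n, (N <= m)%N -> (N <= n)%N -> hn (u m - u n) < e.
Proof.
case/andP=> q0 q1 step e e0.
have c0 : 0 <= c by have := step 0%N; rewrite expr0 mulr1; apply: le_trans (hnorm_ge0 _ _).
have tail n k : (1 - q) * hn (u (n + k)%N - u n) <= c * (q ^+ n - q ^+ (n + k)).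
  elim: k => [|k IH]; first by rewrite addn0 !subrr (hnorm0 Hip) !mulr0.
  have := ler_hnormD Hip (u (n + k).+1 - u (n + k)%N) (u (n + k)%N - u n).
  rewrite addrA subrK addnS => tri.
  have := step (n + k)%N; rewrite exprS; nra.
have far n m : (n <= m)%N -> (1 - q) * hn (u m - u n) <= c * q ^+ n.
  move=> /subnKC <-; apply: le_trans (tail _ _) _.
  by rewrite ler_wpM2l // lerBlDr lerDl exprn_ge0.
set t := e * (1 - q) / (c + 1).
have t0 : 0 < t by rewrite divr_gt0 ?mulr_gt0 ?subr_gt0 // ltr_pwDr.
have tE : t * (c + 1) = e * (1 - q) by rewrite divfK // gt_eqF // ltr_pwDr.
have [N qN] : exists N, q ^+ N <= t by apply: exists_exprn_le; rewrite ?q0.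
have close a b : (N <= a)%N -> (a <= b)%N -> hn (u b - u a) < e.
  move=> Na ab; have := far _ _ ab; have : q ^+ a <= q ^+ N := ler_wiXn2l q0 (ltW q1) Na.
  have := hnorm_ge0 ip (u b - u a); have : 0 <= q ^+ a := exprn_ge0 a q0.
  nra.
exists N => m n Nm Nn; case: (leqP n m) => [nm|/ltnW mn]; first exact: close Nn nm.
by rewrite (hnorm_distC Hip); exact: close Nm mn.
Qed.

Lemma banach_fixpoint (f : V -> V) (q : R) : complete ip -> 0 <= q < 1 ->
  (forall y z, hn (f y - f z) <= q * hn (y - z)) -> exists l, f l = l.
Proof.
move=> Hcomp /andP[q0 q1] fq; pose u n := iter n f 0.
have step n : hn (u n.+1 - u n) <= hn (u 1%N - u 0%N) * q ^+ n.
  elim: n => [|n IH]; first by rewrite expr0 mulr1.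
  by rewrite exprS mulrCA; apply: le_trans (fq _ _) _; rewrite ler_wpM2l.
have q01 : 0 <= q < 1 by rewrite q0.
have [l ul] := Hcomp u (cauchy_of_geometric q01 step).
exists l; apply/eqP; rewrite -subr_eq0; apply/eqP/hnorm_lt_all_eq0 => e e0.
have [N uNl] := ul (e / 2) (divr_gt0 e0 (ltr0Sn _ 1)).
have -> : f l - l = (f l - f (u N)) + (u N.+1 - l) by rewrite addrA subrK.
apply: le_lt_trans (ler_hnormD Hip _ _) _; apply: le_lt_trans (lerD (fq _ _) (lexx _)) _.
rewrite (hnorm_distC Hip); have := uNl N (leqnn N); have := uNl N.+1 (leqnSn N).
have := hnorm_ge0 ip (u N - l); nra.
Qed.
End Completeness.

Section Resolvent.
Variable R : realType.
Variable V : lmodType (complex R).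
Variable ip : V -> V -> complex R.
Hypothesis Hip : is_inner_product ip.
Local Notation hn := (hnorm ip).
Variable A : V -> V.
Hypothesis Acontr : contraction ip A.

Let Alin : is_linear_op A. Proof. by case: Acontr => [[]]. Qed.

Let A_le y : hn (A y) <= hn y.
Proof. by case: Acontr => _ /(_ y); rewrite mul1r. Qed.

Lemma denom_op_linear lam : is_linear_op (denom_op A lam).
Proof. by apply: linear_op_sub => //; apply: linear_op_scale. Qed.

Lemma denom_op_lbound lam y : (1 - cabs (lam / 2%:R)) * hn y <= hn (denom_op A lam y).
Proof.
have := ler_hnormD Hip (denom_op A lam y) ((lam / 2%:R) *: A y).
rewrite subrK hnormZ //; have := A_le y; have := cabs_ge0 (lam / 2%:R).
have := hnorm_ge0 ip (A y); nra.
Qed.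

Lemma right_inverse_denom_norm_le lam S : cabs (lam / 2%:R) < 1 ->
  (forall x, denom_op A lam (S x) = x) -> op_norm_le ip S (1 - cabs (lam / 2%:R))^-1.
Proof.
move=> w1 DS x; have w0 : 0 < 1 - cabs (lam / 2%:R) by rewrite subr_gt0.
by rewrite ler_pdivlMl // -{2}(DS x) denom_op_lbound.
Qed.

Lemma op_inverse_denom_norm_le_near lam mu S : cabs (lam / 2%:R) < 1 ->
  cabs (mu - lam) <= 1 - cabs (lam / 2%:R) ->
  op_inverse ip (denom_op A mu) S -> op_norm_le ip S (2 / (1 - cabs (lam / 2%:R))).
Proof.
move=> w1 near [_ _ DS]; set q := cabs (lam / 2%:R) in w1 near *.
have v_le : cabs (mu / 2%:R) <= q + cabs (mu - lam) / 2.
  have -> : mu / 2%:R = lam / 2%:R + (mu - lam) / 2%:R by rewrite -mulrDl addrC subrK.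
  by rewrite -cabs_half cabsD.
have v1 : cabs (mu / 2%:R) < 1 by lra.
apply: op_norm_le_trans (right_inverse_denom_norm_le v1 DS) _.
by rewrite -[X in _ <= X]invf_div lef_pV2 ?posrE; lra.
Qed.

Lemma denom_op_inj lam : cabs (lam / 2%:R) < 1 -> injective (denom_op A lam).
Proof.
move=> w1 y z eq_yz; apply/eqP; rewrite -subr_eq0; apply/eqP/(hnorm_eq0 Hip).
have := denom_op_lbound lam (y - z); rewrite (linear_opB (denom_op_linear lam)) eq_yz subrr.
rewrite (hnorm0 Hip) pmulr_rle0 ?subr_gt0 // => le0.
by apply/eqP; rewrite eq_le le0 hnorm_ge0.
Qed.

Lemma denom_op_surj lam : complete ip -> cabs (lam / 2%:R) < 1 ->
  forall x, exists y, denom_op A lam y = x.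
Proof.
move=> Hcomp w1 x; set w := lam / 2%:R in w1 *.
have w01 : 0 <= cabs w < 1 by rewrite cabs_ge0.
have contr y z : hn ((x + w *: A y) - (x + w *: A z)) <= cabs w * hn (y - z).
  rewrite opprD addrACA subrr add0r -scalerBr -(linear_opB Alin) hnormZ //.
  by rewrite ler_wpM2l ?cabs_ge0.
have [y fy] := banach_fixpoint Hip Hcomp w01 contr.
by exists y; rewrite /denom_op -/w -{1}fy addrK.
Qed.

Lemma denom_op_invertible lam : complete ip -> cabs (lam / 2%:R) < 1 ->
  exists S, op_inverse ip (denom_op A lam) S.
Proof.
move=> Hcomp w1; have [S DS] := boolp.choice (denom_op_surj Hcomp w1).
have SD y : S (denom_op A lam y) = y by apply: (denom_op_inj w1); rewrite DS.
exists S; split=> //; split.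
  by move=> a x y; apply: (denom_op_inj w1); rewrite DS (denom_op_linear lam) !DS.
by exists (1 - cabs (lam / 2%:R))^-1; apply: right_inverse_denom_norm_le.
Qed.
End Resolvent.

Lemma G_delta_half_bounds (R : realType) (delta : R) (lam : complex R) :
  0 < delta < 1 -> G_delta delta lam ->
  cabs (cR delta * conjc (lam / 2%:R) - lam / 2%:R) < (1 - delta ^+ 2) / 2 /\
  cabs (lam / 2%:R) ^+ 2 <= (1 + delta ^+ 2) / 2.
Proof.
case/andP=> d0 d1; rewrite /G_delta; set w := lam / 2%:R.
have -> : lam = w + w by exact: splitr.
case: w => p q /=; set a := 1 + delta; set b := 1 - delta => G.
have a0 : 0 < a by rewrite /a; lra.
have b0 : 0 < b by rewrite /b; lra.
have G' : 4 * (b ^+ 2 * p ^+ 2 + a ^+ 2 * q ^+ 2) < (a * b) ^+ 2.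
  move: G; rewrite -(ltr_pM2r (exprn_gt0 2 (mulr_gt0 a0 b0))) mul1r.
  congr (_ < _); field; rewrite ?mulf_neq0 ?gt_eqF //.
rewrite /a /b in G'; split.
  rewrite -(ltr_pXn2r (_ : (0 < 2)%N)) ?nnegrE ?cabs_ge0 ?divr_ge0 ?subr_ge0 ?exprn_ile1 ?ltW //.
  by rewrite cabs_sqr /=; nra.
have : 0 <= delta * q ^+ 2 by rewrite mulr_ge0 ?sqr_ge0 ?ltW.
have : 0 < (1 - delta) ^+ 2 by rewrite exprn_gt0 // subr_gt0.
by rewrite cabs_sqr /=; nra.
Qed.

Lemma G_delta_cabs_half_lt1 (R : realType) (delta : R) (lam : complex R) :
  0 < delta < 1 -> G_delta delta lam -> cabs (lam / 2%:R) < 1.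
Proof.
move=> d01 /(G_delta_half_bounds d01) [_]; case/andP: d01 => d0 d1.
by rewrite -(ltr_pXn2r (_ : (0 < 2)%N)) ?nnegrE ?cabs_ge0 // expr1n; nra.
Qed.

Section NumeratorBound.
Variable R : realType.
Variable V : lmodType (complex R).
Variable ip : V -> V -> complex R.
Hypothesis Hip : is_inner_product ip.
Local Notation hn := (hnorm ip).

Lemma hnorm_sqr_gap (delta : R) (w : complex R) (a y : V) :
  hn (y - w *: a) ^+ 2 - hn (cR delta *: a - w *: y) ^+ 2 =
  (1 - cabs w ^+ 2) * hn y ^+ 2 + (cabs w ^+ 2 - delta ^+ 2) * hn a ^+ 2
  + 2 * complex.Re (ip ((cR delta * conjc w - w) *: a) y).
Proof.
rewrite !(hnorm_sqrD Hip) !(hnorm_oppr Hip) !(hnormZ Hip) !(ipNr Hip) !(ipZl Hip) !(ipZr Hip).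
rewrite [ip y a](ipC Hip) !exprMn !cabs_sqr.
by case: w (ip a y) => [p q] [r s] /=; ring.
Qed.

Definition ellipse_margin (delta : R) (lam : complex R) : R :=
  (1 - delta ^+ 2) / 2 - cabs (cR delta * conjc (lam / 2%:R) - lam / 2%:R).

Lemma denom_numer_sqr_gap (delta : R) (A : V -> V) (lam : complex R) (y : V) :
  contraction ip A -> 0 < delta < 1 -> G_delta delta lam ->
  ellipse_margin delta lam * hn y ^+ 2
    <= hn (denom_op A lam y) ^+ 2 - hn (numer_op delta A lam y) ^+ 2.
Proof.
move=> [_ /(_ y)]; rewrite mul1r => AyY d01 G.
have [K_lt w_le] := G_delta_half_bounds d01 G.
rewrite /ellipse_margin /numer_op /denom_op hnorm_sqr_gap.
move: K_lt w_le; set w := lam / 2%:R; set zeta := _ - w => K_lt w_le.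
have := Re_ip_le Hip (- (zeta *: A y)) y.
rewrite (ipNl Hip) (hnorm_oppr Hip) (hnormZ Hip); case: (ip _ y) => r s /= CS.
have := hnorm_ge0 ip y; have := hnorm_ge0 ip (A y).
move: AyY CS; set Y := hn y; set Ay := hn (A y) => AyY CS Ay0 Y0.
have : 0 <= cabs zeta * (Ay - Y) ^+ 2 by rewrite mulr_ge0 ?cabs_ge0 ?sqr_ge0.
have : 0 <= ((1 + delta ^+ 2) / 2 - cabs w ^+ 2) * (Y ^+ 2 - Ay ^+ 2).
  by rewrite mulr_ge0 ?subr_ge0 // ler_pXn2r ?nnegrE.
have : 0 <= ((1 - delta ^+ 2) / 2 - cabs zeta) * Ay ^+ 2.
  by rewrite mulr_ge0 ?sqr_ge0 // subr_ge0 ltW.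
nra.
Qed.

Lemma numer_op_le_denom_op (delta : R) (A : V -> V) (lam : complex R) :
  contraction ip A -> 0 < delta < 1 -> G_delta delta lam ->
  exists c : R, c < 1 /\ forall y, hn (numer_op delta A lam y) <= c * hn (denom_op A lam y).
Proof.
move=> Acontr d01 G; have [K_lt w_le] := G_delta_half_bounds d01 G.
have eta0 : 0 < ellipse_margin delta lam by rewrite subr_gt0.
have eta_le1 : ellipse_margin delta lam <= 1.
  by rewrite /ellipse_margin; have := cabs_ge0 (cR delta * conjc (lam / 2%:R) - lam / 2%:R); nra.
set eta := ellipse_margin delta lam in eta0 eta_le1 *.
have c0 : 0 <= 1 - eta / 4 by lra.
exists (Num.sqrt (1 - eta / 4)); split.
  by rewrite -[X in _ < X]sqrtr1 ltr_sqrt //; lra.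
have denom_le y : hn (denom_op A lam y) <= 2 * hn y.
  apply: le_trans (ler_hnormB Hip _ _) _; rewrite (hnormZ Hip).
  have := hnorm_ge0 ip (A y); have : hn (A y) <= 1 * hn y by case: Acontr.
  have := G_delta_cabs_half_lt1 d01 G; have := cabs_ge0 (lam / 2%:R); nra.
move=> y; apply: hnorm_le; first by rewrite mulr_ge0 ?sqrtr_ge0 ?hnorm_ge0.
have : hn (denom_op A lam y) ^+ 2 <= (2 * hn y) ^+ 2.
  by rewrite ler_pXn2r ?nnegrE ?mulr_ge0 ?hnorm_ge0 ?denom_le.
move=> /(ler_wpM2l (ltW eta0)); have := denom_numer_sqr_gap y Acontr d01 G.
rewrite !exprMn (sqr_sqrtr c0) -/eta; lra.
Qed.
End NumeratorBound.

Lemma holomorphic_at_of_quadratic_remainder (R : realType) (V : lmodType (complex R))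
    (ip : V -> V -> complex R) (G : complex R -> Prop) (F : complex R -> V -> V)
    (lam : complex R) (D : V -> V) (r C : R) :
  bounded_op ip D -> 0 < r ->
  (forall mu, G mu -> cabs (mu - lam) < r ->
     op_norm_le ip (fun x => F mu x - F lam x - (mu - lam) *: D x) (C * cabs (mu - lam) ^+ 2)) ->
  exists D, bounded_op ip D /\ forall e : R, 0 < e -> exists d : R, 0 < d /\
    forall mu, G mu -> 0 < cabs (mu - lam) < d ->
      op_norm_le ip (fun x => F mu x - F lam x - (mu - lam) *: D x) (e * cabs (mu - lam)).
Proof.
move=> Db r0 quad; exists D; split=> // e e0.
have C1 : 0 < `|C| + 1 by rewrite ltr_pwDr.
exists (Num.min r (e / (`|C| + 1))); split; first by rewrite lt_min r0 divr_gt0.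
move=> mu Gmu /andP[_]; rewrite lt_min ltr_pdivlMr // => /andP[mur small].
apply: op_norm_le_trans (quad mu Gmu mur) _; have := cabs_ge0 (mu - lam); have := ler_norm C.
nra.
Qed.

Section Holomorphy.
Variable R : realType.
Variable V : lmodType (complex R).
Variable ip : V -> V -> complex R.
Hypothesis Hip : is_inner_product ip.
Local Notation hn := (hnorm ip).
Variable A : V -> V.
Hypothesis Acontr : contraction ip A.
Variable delta : R.

Let Abounded : bounded_op ip A. Proof. by case: Acontr. Qed.

Lemma numer_op_bounded lam : bounded_op ip (numer_op delta A lam).
Proof.
apply: (bounded_op_sub Hip); apply: (bounded_op_scale Hip) => //.
exact: bounded_op_id.
Qed.

Lemma numer_op_norm_le lam : 0 <= delta ->
  op_norm_le ip (numer_op delta A lam) (delta + cabs (lam / 2%:R)).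
Proof.
move=> d0 x; apply: le_trans (ler_hnormB Hip _ _) _.
rewrite !(hnormZ Hip) cabs_cR // mulrDl lerD2r ler_wpM2l //.
by case: Acontr => _ /(_ x); rewrite mul1r.
Qed.

Lemma resolvent_identity lam mu S S' :
  op_inverse ip (denom_op A lam) S -> op_inverse ip (denom_op A mu) S' ->
  forall y, S' y = S y + ((mu - lam) / 2%:R) *: S' (A (S y)).
Proof.
move=> [_ _ DS] [[S'lin _] S'D _] y.
have denomE z : denom_op A mu z = denom_op A lam z - ((mu - lam) / 2%:R) *: A z.
  by rewrite /denom_op mulrBl scalerBl opprB addrA subrK.
by rewrite -{1}(S'D (S y)) denomE DS (linear_opB S'lin) (linear_opZ S'lin) subrK.
Qed.

(* The derivative of lam |-> numer_op delta A lam \o S_lam, since S_lam has derivative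
   S_lam A S_lam / 2 by the resolvent identity. *)
Definition numer_deriv (lam : complex R) (S : V -> V) : V -> V :=
  fun x => 2%:R^-1 *: (numer_op delta A lam (S (A (S x))) - S x).

Lemma numer_deriv_bounded lam S :
  op_inverse ip (denom_op A lam) S -> bounded_op ip (numer_deriv lam S).
Proof.
case=> Sb _ _; apply: (bounded_op_scale Hip); apply: (bounded_op_sub Hip) => //.
apply: (bounded_op_comp (numer_op_bounded lam)).
exact: (bounded_op_comp Sb (bounded_op_comp Abounded Sb)).
Qed.

Lemma numer_op_remainder lam mu S S' x :
  op_inverse ip (denom_op A lam) S -> op_inverse ip (denom_op A mu) S' ->
  numer_op delta A mu (S' x) - numer_op delta A lam (S x) - (mu - lam) *: numer_deriv lam S x
  = ((mu - lam) / 2%:R) ^+ 2 *: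
      (numer_op delta A lam (S' (A (S (A (S x))))) - S' (A (S x))).
Proof.
move=> HS HS'; set h := (mu - lam) / 2%:R.
have Nlin : is_linear_op (numer_op delta A lam).
  by case: (numer_op_bounded lam).
have numerE z : numer_op delta A mu z = numer_op delta A lam z - h *: z.
  by rewrite /numer_op /h mulrBl scalerBl opprB addrA subrK.
rewrite /numer_deriv scalerA -/h numerE (resolvent_identity HS HS' x).
rewrite [in numer_op _ _ _ (_ + _)](resolvent_identity HS HS' (A (S x))) -/h.
move: Nlin; move: (numer_op delta A lam) => N Nlin.
rewrite !(linear_opD Nlin, linear_opZ Nlin) !(scalerDr, scalerN, scalerA) -expr2.
rewrite (addrAC (N _ + _)) [N _ + _]addrC addrK opprB addrAC [h *: N _ + _]addrC.
by rewrite addrACA subrr addr0 addrKA.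
Qed.

Lemma numer_op_remainder_norm_le lam mu S S' : 0 <= delta <= 1 -> cabs (lam / 2%:R) < 1 ->
  op_inverse ip (denom_op A lam) S -> op_inverse ip (denom_op A mu) S' ->
  cabs (mu - lam) < 1 - cabs (lam / 2%:R) ->
  op_norm_le ip (fun x => numer_op delta A mu (S' x) - numer_op delta A lam (S x)
                          - (mu - lam) *: numer_deriv lam S x)
    ((2 / (1 - cabs (lam / 2%:R))) ^+ 3 * cabs (mu - lam) ^+ 2).
Proof.
move=> /andP[d0 d1] w1 HS HS' near_lam.
set q := cabs (lam / 2%:R) in w1 near_lam *; set B := 2 / (1 - q).
have q0 : 0 <= q := cabs_ge0 _.
have B2 : 2 <= B by rewrite /B ler_pdivlMr ?subr_gt0 //; lra.
have Sle : op_norm_le ip S B.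
  by apply: op_inverse_denom_norm_le_near HS; rewrite // subrr cabs0 subr_ge0 ltW.
have S'le : op_norm_le ip S' B by apply: op_inverse_denom_norm_le_near HS'; rewrite // ltW.
have Ale : op_norm_le ip A 1 by case: Acontr.
have Nle : op_norm_le ip (numer_op delta A lam) 2.
  by apply: op_norm_le_trans (numer_op_norm_le lam d0) _; rewrite -/q; lra.
have B0 : 0 <= B by lra.
have := op_norm_le_sub Hip
  (op_norm_le_comp (ler0n _ 2) Nle (op_norm_le_comp B0 S'le
    (op_norm_le_comp ler01 Ale (op_norm_le_comp B0 Sle (op_norm_le_comp ler01 Ale Sle)))))
  (op_norm_le_comp B0 S'le (op_norm_le_comp ler01 Ale Sle)).
move=> rest x; rewrite numer_op_remainder // (hnormZ Hip) expr2 cabsM cabs_half.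
apply: le_trans (ler_wpM2l _ (rest x)) _; first by rewrite mulr_ge0 ?divr_ge0 ?cabs_ge0.
have : 0 <= B ^+ 2 * (2 * B - 1) by rewrite mulr_ge0 ?sqr_ge0 //; lra.
have := cabs_ge0 (mu - lam); have := hnorm_ge0 ip x.
set c := cabs (mu - lam); set y := hn x => y0 c0 B3.
have : 0 <= c ^+ 2 * y by rewrite mulr_ge0 ?sqr_ge0.
nra.
Qed.
End Holomorphy.

Unset Implicit Arguments.

Theorem lemma2p7 (R : realType) (delta : R) (V : lmodType (complex R))
    (ip : V -> V -> complex R) :
  is_hilbert ip -> 0 < delta < 1 ->
  (forall (T Ts : V -> V), contraction ip T -> is_adjoint ip T Ts ->
     forall lam : complex R, G_delta delta lam ->
       exists S : V -> V, op_inverse ip (denom_op Ts lam) S /\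
         op_norm_lt1 ip (fun x => numer_op delta Ts lam (S x)))
  /\
  (forall (T Ts : V -> V), contraction ip T -> is_adjoint ip T Ts ->
     forall F : complex R -> V -> V,
       (forall lam : complex R, G_delta delta lam ->
          exists S : V -> V, op_inverse ip (denom_op Ts lam) S /\
            (forall x, F lam x = numer_op delta Ts lam (S x))) ->
       holomorphic_on ip (G_delta delta) F).
Proof.
move=> [Hip Hcomp] d01; split=> T Ts HT adj.
  move=> lam Glam; have Ts_contr := adjoint_contraction Hip HT adj.
  have [S HS] := denom_op_invertible Hip Ts_contr Hcomp (G_delta_cabs_half_lt1 d01 Glam).
  have [c [c1 numer_le]] := numer_op_le_denom_op Hip Ts_contr d01 Glam.
  exists S; split=> //; exists c; split=> // x.
  by case: HS => _ _ DS; rewrite -{2}(DS x) numer_le.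
move=> F HF lam Glam; have Ts_contr := adjoint_contraction Hip HT adj.
have [S [HS FS]] := HF lam Glam; have w1 := G_delta_cabs_half_lt1 d01 Glam.
have d01' : 0 <= delta <= 1 by case/andP: d01 => d0 d1; rewrite !ltW.
apply: (holomorphic_at_of_quadratic_remainder (numer_deriv_bounded Hip Ts_contr delta HS)
  (_ : 0 < 1 - cabs (lam / 2%:R))) => [|mu Gmu near_lam x]; first by rewrite subr_gt0.
have [S' [HS' FS']] := HF mu Gmu; rewrite FS FS'.
exact: numer_op_remainder_norm_le.
Qed.
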